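(* Let $n\ge 2$, $u\in\mathbb{R}^n$ and $s,v\in\mathcal{Q}_0(u)$. Then $(sv^t)^{[2]}$ is a $P_0$-matrix.
   Context: For $u\in\mathbb{R}^n$, $\mathcal{Q}(u)$ is the set of vectors with the same entrywise sign pattern as $u$, and $\mathcal{Q}_0(u)$ its closure. A square real matrix is a $P_0$-matrix if all its principal minors are nonnegative. For $M\in\mathbb{R}^{n\times n}$, $M^{[2]}$ is the second additive compound: the matrix of $x\wedge y\mapsto Mx\wedge y+x\wedge My$ on $\Lambda^2\mathbb{R}^n$ in the lexicographically ordered basis $e_i\wedge e_j$, $i<j$. *)

From HB Require Import structures.
From mathcomp Require Import all_boot all_order all_algebra.
From mathcomp Require Import all_classical all_reals all_analysis.
Set Implicit Arguments. Unset Strict Implicit. Unset Printing Implicit Defensive.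
Import Order.TTheory GRing.Theory Num.Theory.
Import numFieldNormedType.Exports.
Local Open Scope classical_set_scope.
Local Open Scope ring_scope.

Definition Qsign (R : realType) (n : nat) (u : 'cV[R]_n) : set 'cV[R]_n :=
  [set x | forall i : 'I_n, Num.sg (x i 0) = Num.sg (u i 0)].

Definition Qsign0 (R : realType) (n : nat) (u : 'cV[R]_n) : set 'cV[R]_n :=
  closure (Qsign u).

(* Index set of the basis e_i /\ e_j, i < j, of Lambda^2 R^n.  Its
   enumeration (inherited from the product 'I_n * 'I_n) is lexicographic. *)
Definition pairs (n : nat) := {p : 'I_n * 'I_n | (p.1 < p.2)%N}.

Definition wedge_coef (R : ringType) (n : nat) (x y : 'cV[R]_n) (p : pairs n) : R :=
  x (val p).1 0 * y (val p).2 0 - x (val p).2 0 * y (val p).1 0.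

Definition ebasis (R : ringType) (n : nat) (k : 'I_n) : 'cV[R]_n :=
  \col_(i < n) (if i == k then 1 else 0).

(* Second additive compound M^[2]: matrix of x/\y |-> Mx/\y + x/\My in the
   lexicographically ordered basis e_i /\ e_j, i < j. Column (k,l) is the
   image of e_k /\ e_l. *)
Definition compound2 (R : ringType) (n : nat) (M : 'M[R]_n) : 'M[R]_#|{: pairs n}| :=
  \matrix_(a, b)
    let p := enum_val a in let q := enum_val b in
    wedge_coef (M *m ebasis R (val q).1) (ebasis R (val q).2) p
    + wedge_coef (ebasis R (val q).1) (M *m ebasis R (val q).2) p.

Definition principal_submx (R : ringType) (m : nat) (A : 'M[R]_m) (S : {set 'I_m})
  : 'M[R]_#|S| :=
  mxsub (fun i : 'I_#|S| => enum_val i) (fun i : 'I_#|S| => enum_val i) A.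

Definition P0_matrix (R : realType) (m : nat) (A : 'M[R]_m) : Prop :=
  forall S : {set 'I_m}, 0 <= \det (principal_submx A S).

From HB Require Import structures.
From mathcomp Require Import all_boot all_order all_algebra.
From mathcomp Require Import all_classical all_reals all_analysis.
From mathcomp Require Import polyrcf ring lra.
Import Order.TTheory GRing.Theory Num.Theory.
Import numFieldNormedType.Exports.
Local Open Scope ring_scope.
Set Implicit Arguments. Unset Strict Implicit. Unset Printing Implicit Defensive.

(* Column e_k /\ e_l of (s v^T)^[2] is v_l (e_k /\ s) - v_k (e_l /\ s), so the
   (p, q) entry is sum_t (e_t /\ s)_p (e_t /\ v)_q and every principal submatrix
   is a product A B^T.  If s_t v_t > 0 for all t, then (e_t /\ s)_p s_t =
   s_p1 s_p2 (e_t /\ 1)_p, whence A B^T = D_s (C W C^T) D_v with D_s, D_v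
   diagonal, det D_s det D_v = prod_p s_p1 s_p2 v_p1 v_p2 >= 0, and
   W = diag(1 / (s_t v_t)) positive, so that C W C^T is positive semidefinite.
   For s, v in Q_0(u) we only have s_t v_t >= 0; moving s and v by e in the
   common sign direction makes every product positive, and the minor, a
   polynomial in e that is nonnegative for e > 0, is nonnegative at e = 0. *)

(* [ewedge w p t] is the coordinate on e_(p.1) /\ e_(p.2) of e_t /\ w. *)
Definition ewedge (R : pzRingType) n (w : 'I_n -> R) (p : pairs n) (t : 'I_n) : R :=
  (t == (val p).1)%:R * w (val p).2 - (t == (val p).2)%:R * w (val p).1.

Definition wedge_gram (R : pzRingType) n k (P : 'I_k -> pairs n) (s v : 'I_n -> R)
  : 'M[R]_k :=
  \matrix_(a, b) \sum_t ewedge s (P a) t * ewedge v (P b) t.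

Lemma sum_mul_ewedge (R : comNzRingType) n (f w : 'I_n -> R) (p : pairs n) :
  \sum_t f t * ewedge w p t = f (val p).1 * w (val p).2 - f (val p).2 * w (val p).1.
Proof.
have sum_delta (a : 'I_n) (x : R) : \sum_t f t * ((t == a)%:R * x) = f a * x.
  rewrite (bigD1 a) //= eqxx mul1r big1 ?addr0 // => t /negbTE ->.
  by rewrite mul0r mulr0.
by rewrite -sum_delta -[X in _ - X]sum_delta -sumrB; apply: eq_bigr => t _; rewrite mulrBr.
Qed.

Lemma compound2_outerE (R : comNzRingType) n (s v : 'cV[R]_n) a b :
  compound2 (s *m v^T) a b =
  \sum_t ewedge (fun i => s i 0) (enum_val a) t * ewedge (fun i => v i 0) (enum_val b) t.
Proof.
rewrite sum_mul_ewedge mxE /wedge_coef /ewedge.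
set p := val (enum_val a); set q := val (enum_val b).
have outer_col k i : (s *m v^T *m ebasis R k) i 0 = s i 0 * v k 0.
  rewrite !mxE (bigD1 k) //= big1 => [|j /negbTE hj]; last by rewrite !mxE hj mulr0.
  by rewrite !mxE eqxx mulr1 addr0 big_ord1 !mxE.
rewrite !outer_col /ebasis !mxE -!mulrb.
rewrite [q.1 == p.1]eq_sym [q.1 == p.2]eq_sym [q.2 == p.1]eq_sym [q.2 == p.2]eq_sym.
ring.
Qed.

Lemma principal_submx_compound2_outer (R : comNzRingType) n (s v : 'cV[R]_n)
    (S : {set 'I_#|{: pairs n}|}) :
  principal_submx (compound2 (s *m v^T)) S =
  wedge_gram (fun a : 'I_#|S| => enum_val (enum_val a)) (fun i => s i 0) (fun i => v i 0).
Proof.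
apply/matrixP => a b; rewrite /principal_submx /mxsub [LHS]mxE [RHS]mxE.
exact: compound2_outerE.
Qed.

Lemma psd_eigenvalue_ge0 (R : rcfType) k (G : 'M[R]_k) a :
  (forall x : 'rV_k, 0 <= (x *m G *m x^T) 0 0) -> eigenvalue G a -> 0 <= a.
Proof.
move=> psd /eigenvalueP [x xG x_neq0].
have [j xj_neq0] := rV0Pn _ x_neq0.
have xxT_gt0 : 0 < (x *m x^T) 0 0.
  rewrite mxE (bigD1 j) //= !mxE -expr2.
  apply: ltr_pwDl; first by rewrite exprn_even_gt0 // xj_neq0 orbT.
  by apply: sumr_ge0 => t _; rewrite mxE -expr2 sqr_ge0.
by have := psd x; rewrite xG -scalemxAl mxE pmulr_lge0.
Qed.

Lemma det_ge0_of_eigenvalues_ge0 (R : rcfType) k (G : 'M[R]_k) :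
  (forall a, eigenvalue G a -> 0 <= a) -> 0 <= \det G.
Proof.
move=> eig_ge0; have [->//|det_neq0] := eqVneq (\det G) 0.
set q := char_poly G.
have q0 : q.[0] = (-1) ^+ k * \det G by rewrite horner_coef0 char_poly_det.
(* No root of the characteristic polynomial lies in ]-oo, 0], so its sign
   at 0 is its sign at -oo, namely (-1)^k. *)
have q_noroot : {in `]-oo, 0], forall y, ~~ root q y}.
  move=> y; rewrite in_itv /= => y_le0; apply/negP => qy.
  have y0 : y = 0 by apply/eqP; rewrite eq_le y_le0 eig_ge0 // eigenvalue_root_char.
  by move: qy; rewrite y0 /root q0 mulf_eq0 signr_eq0 (negbTE det_neq0).
have /(_ 0) := sgp_minftyP q_noroot; rewrite in_itv /= lexx => /(_ isT).
rewrite q0 /sgp_minfty size_char_poly /= (monicP (char_poly_monic G)) mulr1.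
rewrite sgrM sgrX sgrN1 => sg_sign.
have : Num.sg (\det G) = 1.
  by rewrite -(signrMK k (Num.sg (\det G))) sg_sign -exprMn mulrNN mulr1 expr1n.
by move/eqP; rewrite sgr_cp0 => /ltW.
Qed.

Lemma det_mulmx_diag_trmx_ge0 (R : rcfType) k n (C : 'M[R]_(k, n)) (w : 'rV[R]_n) :
  (forall t, 0 <= w 0 t) -> 0 <= \det (C *m diag_mx w *m C^T).
Proof.
move=> w_ge0; apply: det_ge0_of_eigenvalues_ge0 => a; apply: psd_eigenvalue_ge0 => x.
rewrite !mulmxA -[_ *m C^T *m x^T]mulmxA -trmx_mul mxE.
apply: sumr_ge0 => t _; rewrite mul_mx_diag !mxE mulrAC -expr2.
by rewrite mulr_ge0 ?sqr_ge0.
Qed.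

Lemma ewedge_mul_diag (R : comNzRingType) n (w : 'I_n -> R) (p : pairs n) t :
  ewedge w p t * w t = ewedge (fun=> 1) p t * (w (val p).1 * w (val p).2).
Proof.
have p12 : (val p).1 != (val p).2 by rewrite neq_ltn (valP p).
rewrite /ewedge; have [->|_] := eqVneq t (val p).1.
  by rewrite (negbTE p12) mulr1n mulr0n; ring.
have [->|_] := eqVneq t (val p).2; first by rewrite mulr1n mulr0n; ring.
by rewrite !mulr0n; ring.
Qed.

Lemma det_wedge_gram_ge0_of_gt0 (R : rcfType) n k (P : 'I_k -> pairs n) (s v : 'I_n -> R) :
  (forall t, 0 < s t * v t) -> 0 <= \det (wedge_gram P s v).
Proof.
move=> sv_gt0.
pose C : 'M[R]_(k, n) := \matrix_(a, t) ewedge (fun=> 1) (P a) t.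
pose w : 'rV[R]_n := \row_t (s t * v t)^-1.
pose ds : 'rV[R]_k := \row_a (s (val (P a)).1 * s (val (P a)).2).
pose dv : 'rV[R]_k := \row_a (v (val (P a)).1 * v (val (P a)).2).
have factor : wedge_gram P s v = diag_mx ds *m (C *m diag_mx w *m C^T) *m diag_mx dv.
  apply/matrixP => a b; rewrite mul_mx_diag mul_diag_mx !mxE big_distrr big_distrl /=.
  apply: eq_bigr => t _; rewrite mul_mx_diag !mxE.
  have := gt_eqF (sv_gt0 t); rewrite mulf_eq0 => /norP[st vt].
  transitivity (ewedge s (P a) t * s t * (ewedge v (P b) t * v t) * (s t * v t)^-1).
    by field; rewrite st vt.
  by rewrite !ewedge_mul_diag; ring.
rewrite factor !det_mulmx !det_diag mulrAC.
apply: mulr_ge0; last by apply: det_mulmx_diag_trmx_ge0 => t; rewrite mxE invr_ge0 ltW.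
rewrite -big_split /=; apply: prodr_ge0 => a _; rewrite !mxE.
by have := sv_gt0 (val (P a)).1; have := sv_gt0 (val (P a)).2; nra.
Qed.

Lemma map_wedge_gram (R S : comNzRingType) (f : {rmorphism R -> S}) n k
    (P : 'I_k -> pairs n) (s v : 'I_n -> R) :
  map_mx f (wedge_gram P s v) = wedge_gram P (f \o s) (f \o v).
Proof.
apply/matrixP => a b; rewrite !mxE rmorph_sum; apply: eq_bigr => t _.
by rewrite rmorphM /ewedge !rmorphB !rmorphM !rmorph_nat.
Qed.

Lemma poly_ge0_at0 (R : rcfType) (q : {poly R}) :
  (forall e, 0 < e -> 0 <= q.[e]) -> 0 <= q.[0].
Proof.
move=> q_ge0; rewrite leNgt; apply/negP => q0_lt0.
have q_neq0 : q != 0 by apply: contraTneq q0_lt0 => ->; rewrite horner0 ltxx.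
have [y y_near0] := neighpr_wit ltr01 q_neq0.
have y_gt0 : 0 < y by move: y_near0; rewrite /neighpr in_itv /= => /andP[].
have := sgr_neighprN (ltr0_neq0 q0_lt0) y_near0.
by rewrite (ltr0_sg q0_lt0) => /eqP; rewrite sgr_cp0 ltNge q_ge0.
Qed.

Lemma mul_ge0_shift_gt0 (R : realDomainType) (x y e : R) :
  0 <= x * y -> 0 < e ->
  let c := if 0 <= x + y then 1 else -1 in 0 < (x + e * c) * (y + e * c).
Proof.
move=> xy_ge0 e_gt0 /=; have ee_gt0 := mulr_gt0 e_gt0 e_gt0.
case: (lerP 0 (x + y)) => sum_sign; rewrite ?mulr1 ?mulrN1.
- by have := mulr_ge0 (ltW e_gt0) sum_sign; nra.
- have : 0 < e * - (x + y) by rewrite mulr_gt0 // oppr_gt0.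
  by nra.
Qed.

Lemma det_wedge_gram_ge0 (R : rcfType) n k (P : 'I_k -> pairs n) (s v : 'I_n -> R) :
  (forall t, 0 <= s t * v t) -> 0 <= \det (wedge_gram P s v).
Proof.
move=> sv_ge0.
pose c t : R := if 0 <= s t + v t then 1 else -1.
pose shift (w : 'I_n -> R) t : {poly R} := (w t)%:P + (c t)%:P * 'X.
pose q := \det (wedge_gram P (shift s) (shift v)).
have qE e : q.[e] = \det (wedge_gram P (fun t => s t + e * c t) (fun t => v t + e * c t)).
  rewrite /q -horner_evalE -det_map_mx map_wedge_gram.
  by congr (\det (wedge_gram _ _ _)); apply: funext => t;
    rewrite /= /shift horner_evalE !hornerE mulrC.
have -> : wedge_gram P s v = wedge_gram P (fun t => s t + 0 * c t) (fun t => v t + 0 * c t).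
  by congr (wedge_gram _ _ _); apply: funext => t; rewrite mul0r addr0.
rewrite -qE; apply: poly_ge0_at0 => e e_gt0; rewrite qE.
by apply: det_wedge_gram_ge0_of_gt0 => t; apply: mul_ge0_shift_gt0.
Qed.

Lemma sgr_eq_dist_lt_norm (R : realDomainType) (x y : R) :
  `|x - y| < `|x| -> Num.sg y = Num.sg x.
Proof.
rewrite ltr_norml; have [x_lt0|x_gt0|->] := ltgtP x 0; last by rewrite normr0; lra.
- by rewrite ltr0_norm // => /andP[? ?]; rewrite !ltr0_sg //; lra.
- by rewrite gtr0_norm // => /andP[? ?]; rewrite !gtr0_sg //; lra.
Qed.

Lemma Qsign0_sgr (R : realType) n (u s : 'cV[R]_n) i :
  Qsign0 u s -> s i 0 != 0 -> Num.sg (s i 0) = Num.sg (u i 0).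
Proof.
move=> s_cl si_neq0; have r_gt0 : 0 < `|s i 0| by rewrite normr_gt0.
have [y [Qy [_ /(_ i 0) s_y]]] := s_cl _ (nbhsx_ballx s _ r_gt0).
by rewrite -(Qy i) (sgr_eq_dist_lt_norm s_y).
Qed.

Lemma Qsign0_mul_ge0 (R : realType) n (u s v : 'cV[R]_n) i :
  Qsign0 u s -> Qsign0 u v -> 0 <= s i 0 * v i 0.
Proof.
move=> s_cl v_cl; have [->|s_neq0] := eqVneq (s i 0) 0; first by rewrite mul0r.
have [->|v_neq0] := eqVneq (v i 0) 0; first by rewrite mulr0.
by rewrite -sgr_ge0 sgrM (Qsign0_sgr s_cl) // (Qsign0_sgr v_cl) // -expr2 sqr_ge0.
Qed.

Theorem lemma4p1 (R : realType) (n : nat) (hn : (2 <= n)%N)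
  (u s v : 'cV[R]_n) (hs : Qsign0 u s) (hv : Qsign0 u v) :
  P0_matrix (compound2 (s *m v^T)).
Proof.
move=> S; rewrite principal_submx_compound2_outer.
by apply: det_wedge_gram_ge0 => t; apply: Qsign0_mul_ge0 hs hv.
Qed.
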